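(* Let $(\mathfrak A,\mathfrak A_0)$ be a quasi *-algebra with unit $e$ and let $\omega,\theta\in\mathcal R(\mathfrak A,\mathfrak A_0)$ with $\omega\le\theta$. Then $\theta-\omega\in\mathcal R(\mathfrak A,\mathfrak A_0)$.
   Context: A quasi *-algebra $(\mathfrak A,\mathfrak A_0)$ consists of a complex vector space $\mathfrak A$ and a *-algebra $\mathfrak A_0$ which is a linear subspace of $\mathfrak A$, such that: $\mathfrak A$ carries an involution $a\mapsto a^*$ extending that of $\mathfrak A_0$; $\mathfrak A$ is a bimodule over $\mathfrak A_0$ whose module multiplications extend the multiplication of $\mathfrak A_0$, with $(xa)y=x(ay)$ and $a(xy)=(ax)y$ for all $a\in\mathfrak A$, $x,y\in\mathfrak A_0$; and $(ax)^*=x^*a^*$ for all $a\in\mathfrak A$, $x\in\mathfrak A_0$. A unit is an element $e\in\mathfrak A_0$ with $ae=ea=a$ for all $a\in\mathfrak A$. A linear functional $\omega$ on $\mathfrak A$ is representable if (L.1) $\omega(x^*x)\ge0$ for all $x\in\mathfrak A_0$; (L.2) $\omega(y^*a^*x)=\overline{\omega(x^*ay)}$ for all $x,y\in\mathfrak A_0$, $a\in\mathfrak A$; (L.3) for every $a\in\mathfrak A$ there is $\gamma_a>0$ with $|\omega(a^*x)|\le\gamma_a\,\omega(x^*x)^{1/2}$ for all $x\in\mathfrak A_0$. $\mathcal R(\mathfrak A,\mathfrak A_0)$ is the set of representable functionals. For $\omega\in\mathcal R(\mathfrak A,\mathfrak A_0)$: $N_\omega=\{x\in\mathfrak A_0:\omega(x^*x)=0\}$,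 $\lambda_\omega(x)=x+N_\omega$, and $\mathcal H_\omega$ is the Hilbert space completion of $\mathfrak A_0/N_\omega$ for the inner product $\langle\lambda_\omega(x),\lambda_\omega(y)\rangle=\omega(y^*x)$. For $a\in\mathfrak A$, $T_\omega a$ denotes the unique vector of $\mathcal H_\omega$ with $\langle\lambda_\omega(x),T_\omega a\rangle=\omega(a^*x)$ for all $x\in\mathfrak A_0$ (it exists by (L.3)); $T_\omega:\mathfrak A\to\mathcal H_\omega$ is linear. Put $\Omega^\omega(a,b)=\langle T_\omega a,T_\omega b\rangle$, $a,b\in\mathfrak A$ (equivalently $\langle\pi_\omega(a)\xi_\omega,\pi_\omega(b)\xi_\omega\rangle$ for the GNS representation $\pi_\omega$ with cyclic vector $\xi_\omega=\lambda_\omega(e)$). For $\omega,\theta\in\mathcal R(\mathfrak A,\mathfrak A_0)$ write $\omega\le\theta$ if $\Omega^\omega(a,a)\le\Omega^\theta(a,a)$ for all $a\in\mathfrak A$. *)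

(* Scalars: an arbitrary numeric closed field C (the paper's
   case is C = complex numbers). *)
From HB Require Import structures.
From mathcomp Require Import all_boot all_order all_algebra.
Set Implicit Arguments. Unset Strict Implicit. Unset Printing Implicit Defensive.
Import Order.TTheory GRing.Theory Num.Theory.
Local Open Scope ring_scope.

Section QSA.
Variable C : numClosedFieldType.

(* A quasi *-algebra (A, A0): A0 is a *-algebra embedded linearly and
   injectively in A by j; star is the involution of A, star0 that of A0
   (compatible via j); mul0 is the product of A0; lm / rm are the left /
   right module multiplications A0 x A -> A and A x A0 -> A. *)
Definition quasi_star_algebra (A A0 : lmodType C) (j : A0 -> A)
  (star : A -> A) (star0 : A0 -> A0) (mul0 : A0 -> A0 -> A0)
  (lm : A0 -> A -> A) (rm : A -> A0 -> A) : Prop :=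
  (forall (k : C) x y, j (k *: x + y) = k *: j x + j y) /\
  injective j /\
  (forall (k : C) x y z, mul0 (k *: x + y) z = k *: mul0 x z + mul0 y z) /\
  (forall (k : C) x y z, mul0 x (k *: y + z) = k *: mul0 x y + mul0 x z) /\
  (forall x y z, mul0 x (mul0 y z) = mul0 (mul0 x y) z) /\
  (forall (k : C) x y, star0 (k *: x + y) = k^* *: star0 x + star0 y) /\
  (forall x, star0 (star0 x) = x) /\
  (forall x y, star0 (mul0 x y) = mul0 (star0 y) (star0 x)) /\
  (forall (k : C) a b, star (k *: a + b) = k^* *: star a + star b) /\
  (forall a, star (star a) = a) /\
  (forall x, star (j x) = j (star0 x)) /\
  (forall (k : C) x y a, lm (k *: x + y) a = k *: lm x a + lm y a) /\
  (forall (k : C) x a b, lm x (k *: a + b) = k *: lm x a + lm x b) /\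
  (forall (k : C) a b x, rm (k *: a + b) x = k *: rm a x + rm b x) /\
  (forall (k : C) a x y, rm a (k *: x + y) = k *: rm a x + rm a y) /\
  (forall x y a, lm (mul0 x y) a = lm x (lm y a)) /\
  (forall a x y, rm a (mul0 x y) = rm (rm a x) y) /\
  (forall x y, lm x (j y) = j (mul0 x y)) /\
  (forall x y, rm (j x) y = j (mul0 x y)) /\
  (forall x a y, rm (lm x a) y = lm x (rm a y)) /\
  (forall a x, star (rm a x) = lm (star0 x) (star a)).

Definition is_unit_qsa (A A0 : lmodType C) (lm : A0 -> A -> A)
  (rm : A -> A0 -> A) (e : A0) : Prop :=
  forall a, lm e a = a /\ rm a e = a.

Definition representable (A A0 : lmodType C) (j : A0 -> A)
  (star : A -> A) (star0 : A0 -> A0) (mul0 : A0 -> A0 -> A0)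
  (lm : A0 -> A -> A) (rm : A -> A0 -> A) (w : A -> C) : Prop :=
  (forall (k : C) a b, w (k *: a + b) = k * w a + w b) /\
  (forall x, 0 <= w (j (mul0 (star0 x) x))) /\
  (forall x y a,
      w (lm (star0 y) (rm (star a) x)) = (w (lm (star0 x) (rm a y)))^*) /\
  (forall a, exists2 g : C, 0 < g &
     forall x, `|w (rm (star a) x)| <= g * sqrtC (w (j (mul0 (star0 x) x)))).

(* complex Hilbert spaces: inner product linear in the first argument *)
Definition inner_product (H : lmodType C) (ip : H -> H -> C) : Prop :=
  (forall (k : C) u v w, ip (k *: u + v) w = k * ip u w + ip v w) /\
  (forall u v, ip v u = (ip u v)^*) /\
  (forall u, 0 <= ip u u) /\
  (forall u, ip u u = 0 -> u = 0).

Definition hnorm (H : lmodType C) (ip : H -> H -> C) (u : H) : C :=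
  sqrtC (ip u u).

Definition complete_ip (H : lmodType C) (ip : H -> H -> C) : Prop :=
  forall u : nat -> H,
    (forall eps : C, 0 < eps -> exists N, forall m n, (N <= m)%N -> (N <= n)%N ->
        hnorm ip (u m - u n) < eps) ->
    exists v, forall eps : C, 0 < eps -> exists N, forall n, (N <= n)%N ->
        hnorm ip (u n - v) < eps.

(* (H, ip, lam, T) is a GNS realization of w:  H is a Hilbert space,
   lam : A0 -> H linear with dense range and <lam x, lam y> = w(y^* x)
   (so H is (isometric to) the completion of A0/N_w with
   lam x = lambda_w(x)), and T a = T_w a is the vector with
   <lam x, T a> = w(a^* x) for all x in A0. *)
Definition GNS_realization (A A0 : lmodType C) (j : A0 -> A)
  (star : A -> A) (star0 : A0 -> A0) (mul0 : A0 -> A0 -> A0)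
  (rm : A -> A0 -> A) (w : A -> C)
  (H : lmodType C) (ip : H -> H -> C) (lam : A0 -> H) (T : A -> H) : Prop :=
  inner_product ip /\ complete_ip ip /\
  (forall (k : C) x y, lam (k *: x + y) = k *: lam x + lam y) /\
  (forall x y, ip (lam x) (lam y) = w (j (mul0 (star0 y) x))) /\
  (forall (v : H) (eps : C), 0 < eps -> exists x, hnorm ip (v - lam x) < eps) /\
  (forall x a, ip (lam x) (T a) = w (rm (star a) x)).

(* w <= t  iff  Omega^w(a,a) = <T_w a, T_w a> <= <T_t a, T_t a> = Omega^t(a,a)
   for all a, computed in GNS realizations of w and t. *)
Definition Omega_le (A A0 : lmodType C) (j : A0 -> A)
  (star : A -> A) (star0 : A0 -> A0) (mul0 : A0 -> A0 -> A0)
  (rm : A -> A0 -> A) (w t : A -> C) : Prop :=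
  exists (H1 : lmodType C) (ip1 : H1 -> H1 -> C) (lam1 : A0 -> H1) (T1 : A -> H1)
         (H2 : lmodType C) (ip2 : H2 -> H2 -> C) (lam2 : A0 -> H2) (T2 : A -> H2),
    GNS_realization j star star0 mul0 rm w ip1 lam1 T1 /\
    GNS_realization j star star0 mul0 rm t ip2 lam2 T2 /\
    forall a, ip1 (T1 a) (T1 a) <= ip2 (T2 a) (T2 a).

End QSA.

(* In a GNS realization the vector T_w (j x) is the canonical vector
   lambda_w(x), so both quantities defining representability of theta - omega
   are values of  D(a, b) = Omega^theta(a, b) - Omega^omega(a, b):
   (theta - omega)(x^* x) = D(j x, j x)  and  (theta - omega)(a^* x) = D(j x, a).
   Since omega <= theta, D is a positive semidefinite sesquilinear form on A,
   so (L.1) holds and (L.3) follows from the Cauchy-Schwarz inequality for D. *)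
From mathcomp Require Import all_boot all_order all_algebra.
From mathcomp Require Import ring.
Import Order.TTheory GRing.Theory Num.Theory.
Local Open Scope ring_scope.

(* A Cauchy-Schwarz bound read off the quadratic  s |-> D(s a + b, s a + b)
   with p = D(b,b), z = D(b,a), q = D(a,a); the "+ 1" keeps the constant
   positive and avoids the degenerate case q = 0. *)
Lemma normC_le_of_quadratic_ge0 (C : numClosedFieldType) (p q z : C) :
  0 <= q -> (forall s, 0 <= p + s * z^* + s^* * z + s * s^* * q) ->
  `|z| <= sqrtC (q + 1) * sqrtC p.
Proof.
move=> q_ge0 quad_ge0.
have q1_gt0 : 0 < q + 1 := ltr_wpDl q_ge0 ltr01.
have p_ge0 : 0 <= p by have := quad_ge0 0; rewrite rmorph0 !mul0r !addr0.
set r := (q + 1)^-1.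
have r_gt0 : 0 < r by rewrite invr_gt0.
have rq : r * q = 1 - r by rewrite -(mulVf (lt0r_neq0 q1_gt0)) -/r; ring.
have zz_ge0 : 0 <= z * z^* := mul_conjC_ge0 z.
(* the value of the quadratic at s = - z / (q + 1) *)
have := quad_ge0 (- (z * r)).
rewrite rmorphN rmorphM /= (geC0_conj (ltW r_gt0)).
have -> : p + - (z * r) * z^* + - (z^* * r) * z + - (z * r) * - (z^* * r) * q
        = p - z * z^* * r - z * z^* * r ^+ 2.
  transitivity (p - 2 * (z * z^*) * r + z * z^* * r * (r * q)); first by ring.
  by rewrite rq; ring.
move=> value_ge0.
have zzr_le : z * z^* * r <= p.
  rewrite -subr_ge0; apply: (le_trans value_ge0); rewrite lerBlDr lerDl.
  by rewrite mulr_ge0 // exprn_ge0 // ltW.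
have zz_le : z * z^* <= (q + 1) * p.
  by rewrite -ler_pdivrMl // mulrC.
rewrite normC_def -sqrtCM ?nnegrE ?(ltW q1_gt0) //.
by rewrite ler_sqrtC // nnegrE mulr_ge0 // ltW.
Qed.

Section InnerProduct.
Context {C : numClosedFieldType} {H : lmodType C} {ip : H -> H -> C}.
Hypothesis ipP : inner_product ip.

Lemma ipDl k u v w : ip (k *: u + v) w = k * ip u w + ip v w.
Proof. by case: ipP. Qed.

Lemma ipC u v : ip v u = (ip u v)^*.
Proof. by case: ipP => _ []. Qed.

Lemma ipDr u k v w : ip u (k *: v + w) = k^* * ip u v + ip u w.
Proof. by rewrite ipC ipDl rmorphD rmorphM /= -(ipC v u) -(ipC w u). Qed.

Lemma ipBl u v w : ip (v - w) u = ip v u - ip w u.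
Proof. by rewrite -scaleN1r addrC ipDl mulN1r addrC. Qed.

Lemma ipBr u v w : ip u (v - w) = ip u v - ip u w.
Proof. by rewrite -scaleN1r addrC ipDr rmorphN1 mulN1r addrC. Qed.

Lemma ip_expand s u v :
  ip (s *: u + v) (s *: u + v)
  = ip v v + s * (ip v u)^* + s^* * ip v u + s * s^* * ip u u.
Proof. by rewrite ipDl !ipDr -(ipC v u); ring. Qed.

Lemma orthogonal_dense_eq0 {X : Type} {lam : X -> H} :
  (forall (u : H) eps, 0 < eps -> exists x, hnorm ip (u - lam x) < eps) ->
  forall v, (forall x, ip (lam x) v = 0) -> v = 0.
Proof.
move=> dense v orth; have [_ [_ [ip_ge0 ip_eq0]]] := ipP.
apply: ip_eq0; have vv_ge0 := ip_ge0 v.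
have [// | /negPf vv_neq0] := eqVneq (ip v v) 0.
have vv_gt0 : 0 < ip v v by rewrite lt_def vv_neq0.
have [x] : exists x, hnorm ip (v - lam x) < sqrtC (ip v v).
  by apply: dense; rewrite sqrtC_gt0.
rewrite /hnorm.
have -> : ip (v - lam x) (v - lam x) = ip v v + ip (lam x) (lam x).
  by rewrite ipBl !ipBr (ipC (lam x) v) orth rmorph0; ring.
by rewrite ltr_sqrtC ?nnegrE ?addr_ge0 // gtrDl le_gtF.
Qed.

End InnerProduct.

Section GNS.
Context {C : numClosedFieldType} {A A0 : lmodType C} {j : A0 -> A}
  {star : A -> A} {star0 : A0 -> A0} {mul0 : A0 -> A0 -> A0}
  {rm : A -> A0 -> A} {w : A -> C}
  {H : lmodType C} {ip : H -> H -> C} {lam : A0 -> H} {T : A -> H}.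
Hypothesis star_linear :
  forall (k : C) a b, star (k *: a + b) = k^* *: star a + star b.
Hypothesis star_j : forall x, star (j x) = j (star0 x).
Hypothesis rm_linearl :
  forall (k : C) a b x, rm (k *: a + b) x = k *: rm a x + rm b x.
Hypothesis rm_j : forall x y, rm (j x) y = j (mul0 x y).
Hypothesis w_linear : forall (k : C) a b, w (k *: a + b) = k * w a + w b.
Hypothesis gnsP : GNS_realization j star star0 mul0 rm w ip lam T.

Let ipP : inner_product ip. Proof. by case: gnsP. Qed.

Lemma gns_T_eq u v : (forall x, ip (lam x) u = ip (lam x) v) -> u = v.
Proof.
have [_ [_ [_ [_ [dense _]]]]] := gnsP => eq_uv; apply/eqP; rewrite -subr_eq0.
apply/eqP; apply: (orthogonal_dense_eq0 ipP dense) => x.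
by rewrite (ipBr ipP) eq_uv subrr.
Qed.

Lemma gns_T_j x : T (j x) = lam x.
Proof.
have [_ [_ [_ [lam_ip [_ T_ip]]]]] := gnsP.
by apply: gns_T_eq => y; rewrite T_ip lam_ip star_j rm_j.
Qed.

Lemma gns_T_linear (k : C) a b : T (k *: a + b) = k *: T a + T b.
Proof.
have [_ [_ [_ [_ [_ T_ip]]]]] := gnsP.
by apply: gns_T_eq => x; rewrite (ipDr ipP) !T_ip star_linear rm_linearl w_linear.
Qed.

Lemma gns_ip_T_j x a : ip (T (j x)) (T a) = w (rm (star a) x).
Proof. by have [_ [_ [_ [_ [_ T_ip]]]]] := gnsP; rewrite gns_T_j T_ip. Qed.

Lemma gns_ip_T_jj x : ip (T (j x)) (T (j x)) = w (j (mul0 (star0 x) x)).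
Proof. by rewrite gns_ip_T_j star_j rm_j. Qed.

End GNS.

Section OmegaGap.
Context {C : numClosedFieldType} {A A0 : lmodType C} {j : A0 -> A}
  {star : A -> A} {star0 : A0 -> A0} {mul0 : A0 -> A0 -> A0}
  {rm : A -> A0 -> A} {w t : A -> C}
  {H1 : lmodType C} {ip1 : H1 -> H1 -> C} {lam1 : A0 -> H1} {T1 : A -> H1}
  {H2 : lmodType C} {ip2 : H2 -> H2 -> C} {lam2 : A0 -> H2} {T2 : A -> H2}.
Hypothesis star_linear :
  forall (k : C) a b, star (k *: a + b) = k^* *: star a + star b.
Hypothesis star_j : forall x, star (j x) = j (star0 x).
Hypothesis rm_linearl :
  forall (k : C) a b x, rm (k *: a + b) x = k *: rm a x + rm b x.
Hypothesis rm_j : forall x y, rm (j x) y = j (mul0 x y).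
Hypothesis w_linear : forall (k : C) a b, w (k *: a + b) = k * w a + w b.
Hypothesis t_linear : forall (k : C) a b, t (k *: a + b) = k * t a + t b.
Hypothesis gns_w : GNS_realization j star star0 mul0 rm w ip1 lam1 T1.
Hypothesis gns_t : GNS_realization j star star0 mul0 rm t ip2 lam2 T2.

Definition omega_gap a b := ip2 (T2 a) (T2 b) - ip1 (T1 a) (T1 b).

Lemma omega_gap_j x a :
  omega_gap (j x) a = t (rm (star a) x) - w (rm (star a) x).
Proof.
by rewrite /omega_gap (gns_ip_T_j star_j rm_j gns_w) (gns_ip_T_j star_j rm_j gns_t).
Qed.

Lemma omega_gap_jj x :
  omega_gap (j x) (j x) = t (j (mul0 (star0 x) x)) - w (j (mul0 (star0 x) x)).
Proof.
rewrite /omega_gap (gns_ip_T_jj star_j rm_j gns_w).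
by rewrite (gns_ip_T_jj star_j rm_j gns_t).
Qed.

Lemma omega_gap_expand s a b :
  omega_gap (s *: a + b) (s *: a + b) = omega_gap b b + s * (omega_gap b a)^*
    + s^* * omega_gap b a + s * s^* * omega_gap a a.
Proof.
have [ip1P _] := gns_w; have [ip2P _] := gns_t.
rewrite /omega_gap (gns_T_linear star_linear rm_linearl w_linear gns_w).
rewrite (gns_T_linear star_linear rm_linearl t_linear gns_t).
by rewrite (ip_expand ip1P) (ip_expand ip2P) rmorphB; ring.
Qed.

Hypothesis w_le_t : forall a, ip1 (T1 a) (T1 a) <= ip2 (T2 a) (T2 a).

Lemma omega_gap_ge0 a : 0 <= omega_gap a a.
Proof. by rewrite subr_ge0 w_le_t. Qed.

Lemma omega_gap_cauchy_schwarz a b :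
  `|omega_gap b a| <= sqrtC (omega_gap a a + 1) * sqrtC (omega_gap b b).
Proof.
apply: normC_le_of_quadratic_ge0 (omega_gap_ge0 a) _ => s.
by rewrite -omega_gap_expand omega_gap_ge0.
Qed.

End OmegaGap.

Arguments omega_gap {C A H1} ip1 T1 {H2} ip2 T2 a b.

Theorem mainTheorem2 (C : numClosedFieldType) (A A0 : lmodType C)
  (j : A0 -> A) (star : A -> A) (star0 : A0 -> A0) (mul0 : A0 -> A0 -> A0)
  (lm : A0 -> A -> A) (rm : A -> A0 -> A) (e : A0) (w t : A -> C) :
  quasi_star_algebra j star star0 mul0 lm rm ->
  is_unit_qsa lm rm e ->
  representable j star star0 mul0 lm rm w ->
  representable j star star0 mul0 lm rm t ->
  Omega_le j star star0 mul0 rm w t ->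
  representable j star star0 mul0 lm rm (fun a => t a - w a).
Proof.
move=> qsa _ [w_linear [_ [w_herm _]]] [t_linear [_ [t_herm _]]]
  [H1 [ip1 [lam1 [T1 [H2 [ip2 [lam2 [T2 [gns_w [gns_t w_le_t]]]]]]]]]].
have [_ [_ [_ [_ [_ [_ [_ [_ [star_linear [_ [star_j
  [_ [_ [rm_linearl [_ [_ [_ [_ [rm_j _]]]]]]]]]]]]]]]]]]] := qsa.
have gap_j := omega_gap_j star_j rm_j gns_w gns_t.
have gap_jj := omega_gap_jj star_j rm_j gns_w gns_t.
split; [|split; [|split]].
- by move=> k a b; rewrite t_linear w_linear; ring.
- by move=> x; rewrite -gap_jj omega_gap_ge0.
- by move=> x y a; rewrite t_herm w_herm rmorphB.
- move=> a; exists (sqrtC (omega_gap ip1 T1 ip2 T2 a a + 1)).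
    by rewrite sqrtC_gt0 ltr_wpDl ?omega_gap_ge0.
  move=> x; rewrite -gap_j -gap_jj.
  exact: (omega_gap_cauchy_schwarz star_linear rm_linearl w_linear t_linear
            gns_w gns_t w_le_t).
Qed.
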